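(* Let $\omega$ be a primitive third root of unity, $S=\mathbb{C}\langle x,y,z\rangle/(x^2,y^2,z^2)$ graded by $\deg x=\deg y=\deg z=1$. For $p=([A_1:B_1],[A_2:B_2])\in\mathbb{P}^1\times\mathbb{P}^1$ let $I_p$ be the two-sided ideal of $S$ generated by $$A_1(zxy+\omega xyz+\omega^2 yzx)+B_1(yxz+\omega zyx+\omega^2 xzy),\quad A_2(zxy+\omega^2 xyz+\omega yzx)+B_2(yxz+\omega^2 zyx+\omega xzy).$$ Then $\dim (S/I_p)_k=\dim\mathbb{C}[x,y,z]_k=\binom{k+2}{2}$ for all $k\le 4$ if and only if $A_1B_2-A_2B_1=0$. *)

From mathcomp Require Import all_boot all_algebra.
From mathcomp Require Import complex.
From mathcomp Require Import Rstruct.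

Set Implicit Arguments.
Unset Strict Implicit.
Unset Printing Implicit Defensive.

Import GRing.Theory Num.Theory.
Local Open Scope ring_scope.

Notation Cx := (Rdefinitions.R[i]).

Section FreeAlg.
Variable F : fieldType.

Definition LX : 'I_3 := @Ordinal 3 0 isT.
Definition LY : 'I_3 := @Ordinal 3 1 isT.
Definition LZ : 'I_3 := @Ordinal 3 2 isT.

(* An element of the free algebra F<x,y,z> is given by its coefficient
   function on words (finite support is not needed for what follows). *)
Definition ncpoly := seq 'I_3 -> F.

Definition ncmul (f g : ncpoly) : ncpoly :=
  fun w => \sum_(i < (size w).+1) f (take i w) * g (drop i w).

Definition mono (u : seq 'I_3) : ncpoly := fun w => (w == u)%:R.

Definition lin (l : seq (F * seq 'I_3)) : ncpoly :=
  fun w => \sum_(p <- l) p.1 * mono p.2 w.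

Definition words_upto (k : nat) : seq (seq 'I_3) :=
  flatten [seq [seq tval t | t <- enum {: n.-tuple 'I_3}] | n <- iota 0 k.+1].

(* The elements u * g * v, for words u, v of length <= k and g in G.  Their
   degree-k homogeneous components span the degree-k component of the
   two-sided ideal generated by G (words longer than k contribute nothing
   in degree k). *)
Definition ideal_spanning (k : nat) (G : seq ncpoly) : seq ncpoly :=
  flatten [seq [seq ncmul (ncmul (mono u) g) (mono v) | u <- words_upto k, v <- words_upto k]
          | g <- G].

Definition component_mx (k : nat) (L : seq ncpoly) :
  'M[F]_(size L, #|{: k.-tuple 'I_3}|) :=
  \matrix_(i, j) (nth (fun _ => 0) L i) (tval (enum_val j)).

(* dim_F (F<x,y,z>/(G))_k = dim F<x,y,z>_k - dim (G)_k, for G a list of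
   homogeneous elements (so that the ideal (G) is graded). *)
Definition quot_dim (k : nat) (G : seq ncpoly) : nat :=
  #|{: k.-tuple 'I_3}| - \rank (component_mx k (ideal_spanning k G)).

Definition gen1 (w A B : F) : ncpoly :=
  lin [:: (A, [:: LZ; LX; LY]); (A * w, [:: LX; LY; LZ]); (A * w ^+ 2, [:: LY; LZ; LX]);
          (B, [:: LY; LX; LZ]); (B * w, [:: LZ; LY; LX]); (B * w ^+ 2, [:: LX; LZ; LY])].

Definition gen2 (w A B : F) : ncpoly :=
  lin [:: (A, [:: LZ; LX; LY]); (A * w ^+ 2, [:: LX; LY; LZ]); (A * w, [:: LY; LZ; LX]);
          (B, [:: LY; LX; LZ]); (B * w ^+ 2, [:: LZ; LY; LX]); (B * w, [:: LX; LZ; LY])].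

(* S/I_p = F<x,y,z>/(x^2, y^2, z^2, gen1, gen2). *)
Definition SIp_gens (w A1 B1 A2 B2 : F) : seq ncpoly :=
  [:: mono [:: LX; LX]; mono [:: LY; LY]; mono [:: LZ; LZ];
      gen1 w A1 B1; gen2 w A2 B2].

End FreeAlg.

From mathcomp Require Import all_boot all_algebra.
From mathcomp Require Import complex.
From mathcomp Require Import Rstruct.
From mathcomp Require Import ring zify.
Import GRing.Theory Num.Theory.
Local Open Scope ring_scope.

Set Implicit Arguments.
Unset Strict Implicit.
Unset Printing Implicit Defensive.

(* Modulo x^2, y^2 and z^2 the degree-k part of S has a basis of squarefree
   words (1, 3, 6, 12 and 24 of them for k <= 4), and dim (S/I_p)_k is their
   number minus the rank of the squarefree parts of the products u g v of the
   cubic generators g with words u, v of total length k - 3.  Nothing is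
   subtracted for k <= 2, and the two cubics are independent, so the dimensions
   are 1, 3, 6, 10 up to degree 3.  In degree 4, for each letter e the relations
   e g1, e g2, g1 e, g2 e live on six words: two occur only in e g1 and e g2,
   two only in g1 e and g2 e, and on both pairs the coefficients form a
   rescaling of [[A1, B1], [A2, B2]].  So if A1 B2 - A2 B1 <> 0 the twelve
   relations are independent and (S/I_p)_4 has dimension 12, not 15.  If
   (A2, B2) = l (A1, B1), each letter gives the dependency
   g2 e = l w^i (e g1 + g1 e) - e g2 modulo squares, and the remaining nine
   relations are independent, so the dimension is 15.  Lower bounds on ranks are
   certified by explicit functionals pairing unitriangularly with the relations. *)

Lemma In_cat (T : Type) (x : T) (s1 s2 : seq T) :
  List.In x (s1 ++ s2) <-> List.In x s1 \/ List.In x s2.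
Proof. by elim: s1 => [|a s1 IH] /=; [tauto | rewrite IH; tauto]. Qed.

Lemma In_flatten (T : Type) (x : T) (L : seq (seq T)) :
  List.In x (flatten L) <-> exists2 l, List.In l L & List.In x l.
Proof.
elim: L => [|l L IH] /=; first by split => // -[].
rewrite In_cat IH; split => [[Hx|[l' Hl' Hx]]|[l' [<-|Hl'] Hx]].
- by exists l; first left.
- by exists l'; first right.
- by left.
- by right; exists l'.
Qed.

Lemma In_map (T1 T2 : Type) (f : T1 -> T2) y (s : seq T1) :
  List.In y (map f s) <-> exists2 x, List.In x s & y = f x.
Proof.
elim: s => [|a s IH] /=; first by split => // -[].
rewrite IH; split => [[<-|[x Hx ->]]|[x [<-|Hx] ->]].
- by exists a; first left.
- by exists x; first right.
- by left.
- by right; exists x.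
Qed.

Lemma In_mem (T : eqType) (x : T) s : List.In x s <-> x \in s.
Proof.
elim: s => [|a s IH] //=; rewrite inE IH.
by split => [[->|->]|/orP[/eqP ->|]]; rewrite ?eqxx ?orbT; auto.
Qed.

Lemma In_nth (T : Type) (d : T) (s : seq T) x :
  List.In x s -> exists i : 'I_(size s), nth d s i = x.
Proof.
elim: s => [|a s IH] //= [<-|/IH [i <-]]; first by exists ord0.
by exists (lift ord0 i).
Qed.

Lemma nth_In (T : Type) (d : T) (s : seq T) i : (i < size s)%N -> List.In (nth d s i) s.
Proof. by elim: s i => [|a s IH] [|i] //= Hi; [left | right; apply: IH]. Qed.

Definition sqfree (s : seq 'I_3) : bool := sorted (fun a b => a != b) s.

Lemma sqfree_catsq (u v : seq 'I_3) a : sqfree (u ++ [:: a; a] ++ v) = false.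
Proof.
rewrite /sqfree; elim: u => [|b [|c u] IH] /=; rewrite ?eqxx ?andbF //.
by move: IH => /= ->; rewrite andbF.
Qed.

Lemma not_sqfreeP (s : seq 'I_3) :
  ~~ sqfree s -> exists u a v, s = u ++ [:: a; a] ++ v.
Proof.
rewrite /sqfree; elim: s => [|a [|b t] IH] //=.
case: (eqVneq a b) => [<- _|neq_ab]; first by exists [::], a, t.
by case/IH => u [c [v ->]]; exists (a :: u), c, v.
Qed.

Lemma ord3P (a : 'I_3) : [\/ a = LX, a = LY | a = LZ].
Proof.
by case: a => [[|[|[|]]]] // ?; [constructor 1 | constructor 2 | constructor 3]; apply/val_inj.
Qed.

Fixpoint all_words (k : nat) : seq (seq 'I_3) :=
  if k is k'.+1 then [seq a :: s | a <- [:: LX; LY; LZ], s <- all_words k'] else [:: [::]].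

Lemma all_wordsP k s : (s \in all_words k) = (size s == k).
Proof.
elim: k s => [|k IH] s; first by case: s.
apply/allpairsP/idP => [[[a t] [_ Ht ->]] | ]; first by rewrite /= eqSS -IH.
case: s => // a s Hs; exists (a, s); split; last by [].
  by case: (ord3P a) => ->; rewrite !inE eqxx ?orbT.
by rewrite IH.
Qed.

Lemma uniq_all_words k : uniq (all_words k).
Proof.
by elim: k => // k IH; apply: allpairs_uniq => // -[a s] [b t] _ _ [-> ->].
Qed.

Definition sqfree_idx k : {set 'I_#|{: k.-tuple 'I_3}|} :=
  [set j | sqfree (tval (enum_val j))].

Lemma card_sqfree_idx k : #|sqfree_idx k| = count sqfree (all_words k).
Proof.
have -> : sqfree_idx k = enum_val @^-1: [set t : k.-tuple 'I_3 | sqfree t].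
  by apply/setP => j; rewrite !inE.
rewrite on_card_preimset; last by apply: onW_bij; exact: enum_val_bij.
set s := filter sqfree (all_words k).
pose s' : seq (k.-tuple 'I_3) := pmap insub s.
rewrite (@eq_card _ _ (mem s')); last first.
  by move=> t; rewrite inE mem_pmap_sub mem_filter all_wordsP size_tuple eqxx andbT.
rewrite (card_uniqP (pmap_sub_uniq _ (filter_uniq _ (uniq_all_words k)))).
rewrite size_pmap_sub count_filter; apply: eq_in_count => t.
by rewrite all_wordsP /= => ->.
Qed.

Lemma mem_words_upto k u : (u \in words_upto k) = (size u <= k)%N.
Proof.
apply/flattenP/idP => [[s /mapP [n Hn ->] /mapP [t _ ->]]|Hu].
  by rewrite size_tuple; move: Hn; rewrite mem_iota.
exists [seq tval t | t <- enum {: (size u).-tuple 'I_3}].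
  by apply/mapP; exists (size u); rewrite ?mem_iota.
by apply/mapP; exists (Tuple (eqxx (size u))); rewrite ?mem_enum.
Qed.

Section FreeAlgebra.
Variable F : fieldType.
Local Notation ncpoly := (ncpoly F).

Definition sandwich (u : seq 'I_3) (g : ncpoly) (v : seq 'I_3) : ncpoly :=
  ncmul (ncmul (mono F u) g) (mono F v).

Definition homogeneous (d : nat) (f : ncpoly) := forall s, size s != d -> f s = 0.

Lemma ncmul_monol u (f : ncpoly) t :
  ncmul (mono F u) f t = if take (size u) t == u then f (drop (size u) t) else 0.
Proof.
rewrite /ncmul /mono (bigD1 (inord (minn (size u) (size t)))) //= big1 => [|i].
  rewrite inordK ?ltnS ?geq_minr // addr0.
  case: (leqP (size u) (size t)) => [le_ut|lt_tu].
    by case: eqP; rewrite ?mul1r ?mul0r.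
  have ne_u n : take n t != u.
    apply/eqP => /(congr1 size); rewrite size_take_min => E.
    by move: (geq_minr n (size t)); rewrite E leqNgt lt_tu.
  by rewrite (negbTE (ne_u _)) (negbTE (ne_u _)) mul0r.
move=> /eqP ne_i; case: eqP => [Eu|]; last by rewrite mul0r.
case: ne_i; apply/val_inj; rewrite /= inordK -Eu size_take_min ?ltnS ?geq_minr //.
by rewrite -minnA minnn; apply/esym/minn_idPl; rewrite -ltnS.
Qed.

Lemma ncmul_monor (f : ncpoly) v t :
  ncmul f (mono F v) t =
  if drop (size t - size v) t == v then f (take (size t - size v) t) else 0.
Proof.
rewrite /ncmul /mono (bigD1 (inord (size t - size v))) //= big1 => [|i].
  by rewrite inordK ?ltnS ?leq_subr // addr0; case: eqP; rewrite ?mulr1 ?mulr0.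
move=> /eqP ne_i; case: eqP => [Ev|]; last by rewrite mulr0.
case: ne_i; apply/val_inj; rewrite /= inordK ?ltnS ?leq_subr // -Ev size_drop.
by rewrite subKn // -ltnS.
Qed.

Lemma sandwichE u g v t : sandwich u g v t =
  if drop (size t - size v) t == v then
    (if take (size u) (take (size t - size v) t) == u then
       g (drop (size u) (take (size t - size v) t)) else 0) else 0.
Proof. by rewrite /sandwich ncmul_monor ncmul_monol. Qed.

Lemma sandwich_mono u m v : sandwich u (mono F m) v =1 mono F (u ++ m ++ v).
Proof.
move=> t; rewrite sandwichE /mono.
case: (eqVneq t (u ++ m ++ v)) => [->|Hne].
  rewrite !size_cat addnA addnK catA drop_size_cat ?size_cat // eqxx.
  by rewrite take_size_cat ?size_cat // take_size_cat // eqxx drop_size_cat // eqxx.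
case: eqP => // Ev; case: eqP => // Eu; case: eqP => // Em.
case/eqP: Hne.
by rewrite -[t](cat_take_drop (size t - size v)) Ev -[take _ t](cat_take_drop (size u)) Eu Em -catA.
Qed.

Lemma sandwich_homogeneous d u g v :
  homogeneous d g -> homogeneous (size u + d + size v) (sandwich u g v).
Proof.
move=> hom_g t Ht; rewrite sandwichE.
case: eqP => // Ev; case: eqP => // Eu; apply: hom_g; apply: contra_neq Ht => Ed.
rewrite -[t](cat_take_drop (size t - size v)) Ev -[take _ t](cat_take_drop (size u)) Eu.
by rewrite !size_cat Ed.
Qed.

Lemma lin_homogeneous d (l : seq (F * seq 'I_3)) :
  all (fun p => size p.2 == d) l -> homogeneous d (lin l).
Proof.
move=> /allP Hl s Hs; rewrite /lin big_seq big1 // => p /Hl /eqP Hp.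
by rewrite /mono; case: eqP => [Es|]; [move: Hs; rewrite Es Hp eqxx | rewrite mulr0].
Qed.

Lemma In_ideal_spanning k (G : seq ncpoly) f : List.In f (ideal_spanning k G) <->
  exists g u v, [/\ List.In g G, (size u <= k)%N, (size v <= k)%N & f = sandwich u g v].
Proof.
rewrite /ideal_spanning In_flatten; split.
  case=> l /In_map [g Hg ->] /In_flatten [l' /In_map [u Hu ->] /In_map [v Hv ->]].
  by exists g, u, v; move: Hu Hv; rewrite !In_mem !mem_words_upto.
case=> g [u [v [Hg Hu Hv ->]]].
exists [seq sandwich u g v | u <- words_upto k, v <- words_upto k]; first by apply/In_map; exists g.
apply/In_flatten; eexists; first by apply/In_map; exists u; rewrite ?In_mem ?mem_words_upto.
by apply/In_map; exists v; rewrite ?In_mem ?mem_words_upto.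
Qed.

End FreeAlgebra.

Section CoefficientMatrices.
Variable F : fieldType.
Local Notation ncpoly := (ncpoly F).
Local Notation nwords k := #|{: k.-tuple 'I_3}|.

Definition coef_row k (f : ncpoly) : 'rV[F]_(nwords k) := \row_j f (tval (enum_val j)).

Definition sqfree_part (f : ncpoly) : ncpoly := fun t => if sqfree t then f t else 0.

Definition sqfree_mx k : 'M[F]_(nwords k) :=
  \matrix_(i, j) ((i == j) && (i \in sqfree_idx k))%:R.

Lemma row_component_mx k (L : seq ncpoly) i :
  row i (component_mx k L) = coef_row k (nth (fun _ => 0) L i).
Proof. by apply/rowP => j; rewrite !mxE. Qed.

Lemma coef_row_sub k (L : seq ncpoly) f :
  List.In f L -> (coef_row k f <= component_mx k L)%MS.
Proof. by case/(In_nth (fun _ => 0)) => i <-; rewrite -row_component_mx row_sub. Qed.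

Lemma coef_row_sqfree k f : coef_row k f *m sqfree_mx k = coef_row k (sqfree_part f).
Proof.
apply/rowP => j; rewrite !mxE (bigD1 j) //= big1 => [|i /negbTE ne_ij]; last first.
  by rewrite !mxE ne_ij mulr0.
by rewrite !mxE eqxx /= inE /sqfree_part addr0; case: sqfree; rewrite ?mulr1 ?mulr0.
Qed.

Lemma rank_sqfree_mx k : \rank (sqfree_mx k) = #|sqfree_idx k|.
Proof.
pose B : 'M[F]_(#|sqfree_idx k|, nwords k) := \matrix_(i, j) (j == enum_val i)%:R.
have rB : \rank B = #|sqfree_idx k|.
  apply/eqP/row_freeP; exists B^T; apply/matrixP => i l.
  rewrite !mxE (bigD1 (enum_val i)) //= big1 => [|j /negbTE ne_j]; last by rewrite !mxE ne_j mul0r.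
  by rewrite !mxE eqxx mul1r addr0 (inj_eq enum_val_inj) eq_sym.
rewrite -rB; apply/eqP; rewrite eqn_leq !mxrankS //; apply/row_subP.
  move=> i; rewrite (_ : row i B = row (enum_val i) (sqfree_mx k)) ?row_sub //.
  by apply/rowP => l; rewrite !mxE enum_valP andbT eq_sym.
move=> j; case Sj: (j \in sqfree_idx k).
  rewrite (_ : row j (sqfree_mx k) = row (enum_rank_in Sj j) B) ?row_sub //.
  by apply/rowP => l; rewrite !mxE enum_rankK_in // Sj andbT eq_sym.
rewrite (_ : row j (sqfree_mx k) = 0) ?sub0mx //.
by apply/rowP => l; rewrite !mxE Sj andbF.
Qed.

(* A row space containing every non-squarefree word splits as the squarefree
   projection plus the span of those words, which is the kernel of [sqfree_mx]. *)
Lemma rank_sqfree_split k m (M : 'M[F]_(m, nwords k)) :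
  (forall j, j \notin sqfree_idx k -> ((delta_mx 0 j : 'rV_(nwords k)) <= M)%MS) ->
  \rank M = (\rank (M *m sqfree_mx k) + (nwords k - #|sqfree_idx k|))%N.
Proof.
move=> deltaM; rewrite -{1}(mxrank_mul_ker M (sqfree_mx k)); congr addn.
pose Q : 'M[F]_(nwords k) := \matrix_(i, j) ((i == j) && (i \notin sqfree_idx k))%:R.
have kerM : (kermx (sqfree_mx k) <= M)%MS.
  have -> : kermx (sqfree_mx k) = kermx (sqfree_mx k) *m Q.
    have -> : Q = 1%:M - sqfree_mx k.
      apply/matrixP => i j; rewrite !mxE.
      by case: eqP; case: (i \in sqfree_idx k); rewrite /= ?subrr ?subr0.
    by rewrite mulmxBr mulmx1 mulmx_ker subr0.
  apply: submx_trans (submxMl _ _) _; apply/row_subP => j.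
  case Sj: (j \in sqfree_idx k).
    by rewrite (_ : row j Q = 0) ?sub0mx //; apply/rowP => l; rewrite !mxE Sj andbF.
  rewrite (_ : row j Q = delta_mx 0 j); first by apply: deltaM; rewrite Sj.
  by apply/rowP => l; rewrite !mxE Sj andbT eq_sym.
have -> : \rank (M :&: kermx (sqfree_mx k)) = \rank (kermx (sqfree_mx k)).
  by apply/eqP; rewrite eqn_leq !mxrankS ?capmxSr // sub_capmx kerM submx_refl.
by rewrite mxrank_ker rank_sqfree_mx.
Qed.

End CoefficientMatrices.

Section QuotientDimension.
Variable F : fieldType.
Local Notation ncpoly := (ncpoly F).
Local Notation nwords k := #|{: k.-tuple 'I_3}|.

Lemma coef_row_sqfree_eq0 k d (f : ncpoly) :
  homogeneous d f -> d != k -> coef_row k (sqfree_part f) = 0.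
Proof.
move=> hom_f ne_dk; apply/rowP => j; rewrite !mxE /sqfree_part.
by case: sqfree => //; apply: hom_f; rewrite size_tuple eq_sym.
Qed.

Lemma coef_row_sqfree_square k u a v :
  coef_row k (sqfree_part (sandwich u (mono F [:: a; a]) v)) = 0.
Proof.
apply/rowP => j; rewrite !mxE /sqfree_part sandwich_mono /mono.
by case: eqP => [->|]; rewrite ?sqfree_catsq ?if_same.
Qed.

Lemma quot_dimE k (G R : seq ncpoly) :
  (forall a : 'I_3, List.In (mono F [:: a; a]) G) ->
  (forall g u v, List.In g G ->
     coef_row k (sqfree_part (sandwich u g v)) = 0 \/ List.In (sandwich u g v) R) ->
  (forall f, List.In f R -> List.In f (ideal_spanning k G)) ->
  quot_dim k G = (#|sqfree_idx k| - \rank (component_mx k R *m sqfree_mx F k))%N.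
Proof.
move=> sqG spanR Rsub.
set M := component_mx k (ideal_spanning k G).
have deltaM j : j \notin sqfree_idx k -> ((delta_mx 0 j : 'rV_(nwords k)) <= M)%MS.
  rewrite inE => /not_sqfreeP [u [a [v Ej]]].
  have sz := size_tuple (enum_val j); rewrite Ej !size_cat in sz.
  have -> : delta_mx 0 j = coef_row k (sandwich u (mono F [:: a; a]) v).
    apply/rowP => l; rewrite !mxE sandwich_mono -Ej /mono.
    by rewrite (inj_eq val_inj) (inj_eq enum_val_inj).
  apply/coef_row_sub/In_ideal_spanning; exists (mono F [:: a; a]), u, v.
  by split; rewrite // -sz ?leq_addr // !addnA leq_addl.
rewrite /quot_dim (rank_sqfree_split deltaM).
have -> : \rank (M *m sqfree_mx F k) = \rank (component_mx k R *m sqfree_mx F k).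
  apply/eqP; rewrite eqn_leq !mxrankS //; apply/row_subP => i.
    by rewrite row_mul row_component_mx submxMr // coef_row_sub //; apply/Rsub/nth_In.
  rewrite row_mul row_component_mx coef_row_sqfree.
  have [g [u [v [Gg _ _ ->]]]] :=
    iffLR (In_ideal_spanning _ _ _) (nth_In (fun _ => 0) (ltn_ord i)).
  case: (spanR g u v Gg) => [->|Rf]; first exact: sub0mx.
  by rewrite -coef_row_sqfree submxMr // coef_row_sub.
have rank_le : (\rank (component_mx k R *m sqfree_mx F k) <= #|sqfree_idx k|)%N.
  by rewrite -(rank_sqfree_mx F k) mxrankM_maxr.
have card_le : (#|sqfree_idx k| <= nwords k)%N by rewrite -[X in (_ <= X)%N]card_ord max_card.
by rewrite addnC subnDA subKn.
Qed.

Definition dual_mx k r (cs : seq (seq (F * seq 'I_3))) : 'M[F]_(nwords k, r) :=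
  \matrix_(j, l) lin (nth [::] cs l) (tval (enum_val j)).

Lemma dual_mxE k (R : seq ncpoly) r cs i (l : 'I_r) :
  all (fun p => size p.2 == k) (nth [::] cs l) ->
  (component_mx k R *m sqfree_mx F k *m dual_mx k r cs) i l =
  \sum_(p <- nth [::] cs l) p.1 * sqfree_part (nth (fun _ => 0) R i) p.2.
Proof.
move=> /allP szk; rewrite mxE.
have XE j : (component_mx k R *m sqfree_mx F k) i j =
    sqfree_part (nth (fun _ => 0) R i) (tval (enum_val j)).
  transitivity (row i (component_mx k R *m sqfree_mx F k) 0 j); first by rewrite [RHS]mxE.
  by rewrite row_mul row_component_mx coef_row_sqfree mxE.
under eq_bigr => j _ do rewrite XE mxE /lin big_distrr.
rewrite exchange_big; apply: eq_big_seq => p /szk /eqP szp /=.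
rewrite (bigD1 (enum_rank (Tuple (introT eqP szp)))) //= enum_rankK /= /mono eqxx mulr1 big1 ?addr0.
  by rewrite mulrC.
move=> j ne_j; case: eqP => [Ej|]; last by rewrite !mulr0.
by case/eqP: ne_j; apply: enum_val_inj; rewrite enum_rankK; apply: val_inj.
Qed.

Lemma rank_dual_certificate k (R : seq ncpoly) cs :
  all (all (fun p => size p.2 == k)) cs ->
  (forall i l : 'I_(size R), (i <= l)%N ->
     \sum_(p <- nth [::] cs l) p.1 * sqfree_part (nth (fun _ => 0) R i) p.2 = (i == l)%:R) ->
  \rank (component_mx k R *m sqfree_mx F k) = size R.
Proof.
move=> szk pairing; set X := _ *m _.
have XC_ij (i l : 'I_(size R)) : (i <= l)%N -> (X *m dual_mx k (size R) cs) i l = (i == l)%:R.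
  move=> le_il; rewrite dual_mxE ?pairing //.
  case: (ltnP l (size cs)) => [lt_l|le_l]; last by rewrite nth_default.
  by apply: (allP szk); rewrite mem_nth.
have unitXC : X *m dual_mx k (size R) cs \in unitmx.
  rewrite unitmxE det_trig; last first.
    apply/is_trig_mxP => i j lt_ij; rewrite XC_ij ?(ltnW lt_ij) //.
    by case: eqP lt_ij => // ->; rewrite ltnn.
  by rewrite big1 ?unitr1 // => i _; rewrite XC_ij ?eqxx.
by apply/eqP; rewrite eqn_leq rank_leq_row -{1}(mxrank_unit unitXC) mxrankM_maxl.
Qed.

Lemma sqfree_part_sub k (R : seq ncpoly) f :
  List.In f R -> (coef_row k (sqfree_part f) <= component_mx k R *m sqfree_mx F k)%MS.
Proof. by move=> Rf; rewrite -coef_row_sqfree submxMr // coef_row_sub. Qed.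

Lemma rank_sqfree_le k (R R' : seq ncpoly) :
  (forall f, List.In f R ->
     (coef_row k (sqfree_part f) <= component_mx k R' *m sqfree_mx F k)%MS) ->
  (\rank (component_mx k R *m sqfree_mx F k) <= \rank (component_mx k R' *m sqfree_mx F k))%N.
Proof.
move=> RR'; apply/mxrankS/row_subP => i.
by rewrite row_mul row_component_mx coef_row_sqfree; apply/RR'/nth_In.
Qed.

Lemma sqfree_part_lincomb_sub k (R : seq ncpoly) f (cf : seq (F * ncpoly)) :
  (forall p, List.In p cf -> List.In p.2 R) ->
  (forall t : k.-tuple 'I_3, sqfree_part f t = \sum_(p <- cf) p.1 * sqfree_part p.2 t) ->
  (coef_row k (sqfree_part f) <= component_mx k R *m sqfree_mx F k)%MS.
Proof.
move=> cfR Ef; have -> : coef_row k (sqfree_part f) =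
    \sum_(p <- cf) p.1 *: coef_row k (sqfree_part p.2).
  by apply/rowP => j; rewrite !mxE Ef summxE; apply: eq_bigr => p _; rewrite !mxE.
elim: cf cfR {Ef} => [|p cf IH] cfR; first by rewrite big_nil sub0mx.
rewrite big_cons addmx_sub ?IH ?scalemx_sub // => [|q Hq]; last by apply: cfR; right.
by apply/sqfree_part_sub/cfR; left.
Qed.

End QuotientDimension.

Section Relations.
Variables (F : fieldType) (w A1 B1 A2 B2 : F).
Local Notation G := (SIp_gens w A1 B1 A2 B2).
Local Notation g1 := (gen1 w A1 B1).
Local Notation g2 := (gen2 w A2 B2).

Lemma gen1_homogeneous : homogeneous 3 g1.
Proof. exact: lin_homogeneous. Qed.

Lemma gen2_homogeneous : homogeneous 3 g2.
Proof. exact: lin_homogeneous. Qed.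

Lemma square_in_gens (a : 'I_3) : List.In (mono F [:: a; a]) G.
Proof. by case: (ord3P a) => ->; rewrite /=; auto. Qed.

Lemma sandwich_gens_spanned k R :
  (forall u v, (size u + 3 + size v)%N = k ->
     List.In (sandwich u g1 v) R /\ List.In (sandwich u g2 v) R) ->
  forall g u v, List.In g G ->
    coef_row k (sqfree_part (sandwich u g v)) = 0 \/ List.In (sandwich u g v) R.
Proof.
move=> gR g u v; case=> [|[|[|[|[|[]]]]]] <-; try by left; apply: coef_row_sqfree_square.
all: have [/gR[]|ne_k] := eqVneq (size u + 3 + size v)%N k; [by right | left].
all: apply: coef_row_sqfree_eq0 ne_k; apply: sandwich_homogeneous.
- exact: gen1_homogeneous.
- exact: gen2_homogeneous.
Qed.

Definition deg3_rels := [:: sandwich [::] g1 [::]; sandwich [::] g2 [::]].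

Definition deg4_rels := flatten [seq [:: sandwich [:: a] g1 [::]; sandwich [:: a] g2 [::];
                                        sandwich [::] g1 [:: a]; sandwich [::] g2 [:: a]]
                                | a <- [:: LX; LY; LZ]].

Lemma quot_dim_le2 k : (k <= 2)%N -> quot_dim k G = #|sqfree_idx k|.
Proof.
move=> le_k2; rewrite (@quot_dimE _ k G [::] square_in_gens) //.
  have := rank_leq_row (component_mx k [::] *m sqfree_mx F k).
  by rewrite leqn0 => /eqP ->; rewrite subn0.
by apply: sandwich_gens_spanned => u v Ek; move: le_k2; rewrite -Ek addnAC addnC.
Qed.

Lemma quot_dim3 :
  quot_dim 3 G = (#|sqfree_idx 3| - \rank (component_mx 3 deg3_rels *m sqfree_mx F 3))%N.
Proof.
rewrite (@quot_dimE _ 3 G deg3_rels square_in_gens) //.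
  apply: sandwich_gens_spanned => u v Ek.
  have [-> ->] : u = [::] /\ v = [::] by split; apply/size0nil; lia.
  by split; [left | right; left].
move=> f Rf; apply/In_ideal_spanning.
by do ![case: Rf => [<-|Rf]]; do 3 eexists; (split; last reflexivity); rewrite //=; auto 6.
Qed.

Lemma quot_dim4 :
  quot_dim 4 G = (#|sqfree_idx 4| - \rank (component_mx 4 deg4_rels *m sqfree_mx F 4))%N.
Proof.
rewrite (@quot_dimE _ 4 G deg4_rels square_in_gens) //.
  apply: sandwich_gens_spanned => u v Ek.
  case: u Ek => [|a [|? ?]]; case: v => [|b [|? ?]] //= Ek; try lia.
  - by rewrite /deg4_rels /=; case: (ord3P b) => ->; split; do ?[by left | right].
  - by rewrite /deg4_rels /=; case: (ord3P a) => ->; split; do ?[by left | right].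
move=> f; rewrite /deg4_rels /= => Rf; apply/In_ideal_spanning.
by do ![case: Rf => [<-|Rf]]; do 3 eexists; (split; last reflexivity); rewrite //=; auto 6.
Qed.

End Relations.

Ltac case_ord_rec m lt_m := destruct m as [|m]; [| first [by [] | case_ord_rec m lt_m]].
Ltac case_ord i := let m := fresh "m" in let lt_m := fresh "lt_m" in
  case: i => m lt_m; case_ord_rec m lt_m.

Definition scale_dual (F : fieldType) (c : F) (phi : seq (F * seq 'I_3)) :=
  [seq (c * p.1, p.2) | p <- phi].

Local Notation x := LX.
Local Notation y := LY.
Local Notation z := LZ.

Section Degree3.
Variables (F : fieldType) (w A1 B1 A2 B2 a1 b1 a2 b2 : F).
Hypothesis w_neq_w2 : w - w ^+ 2 != 0.
Hypotheses (N1_neq0 : A1 * a1 + B1 * b1 != 0) (N2_neq0 : A2 * a2 + B2 * b2 != 0).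

(* The second functional vanishes on g1, whose coefficients on zxy, xyz and on
   yxz, zyx are in the ratio 1 : w. *)
Definition deg3_dual := [::
  scale_dual (A1 * a1 + B1 * b1)^-1 [:: (a1, [:: z; x; y]); (b1, [:: y; x; z])];
  scale_dual ((w - w ^+ 2) * (A2 * a2 + B2 * b2))^-1
    [:: (a2 * w, [:: z; x; y]); (- a2, [:: x; y; z]);
        (b2 * w, [:: y; x; z]); (- b2, [:: z; y; x])]].

Lemma rank_deg3 : \rank (component_mx 3 (deg3_rels w A1 B1 A2 B2) *m sqfree_mx F 3) = 2%N.
Proof.
apply: (@rank_dual_certificate _ _ _ deg3_dual) => // i l.
case_ord i; case_ord l => // _.
all: rewrite /= !big_cons !big_nil /sqfree_part /= !sandwichE /= /gen1 /gen2 /lin /mono /=.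
all: rewrite ?big_cons ?big_nil /=; field.
all: by rewrite ?w_neq_w2 ?N1_neq0 ?N2_neq0.
Qed.

End Degree3.

Section Degree4Generic.
Variables (F : fieldType) (w A1 B1 A2 B2 : F).
Hypotheses (w_neq0 : w != 0) (det_neq0 : A1 * B2 - A2 * B1 != 0).

(* On their two private words, the rows e g1 and e g2 (or g1 e and g2 e) have
   coefficients [c1 A1, c1 B1] and [c2 A2, c2 B2]; [dual_pair] inverts this block. *)
Definition dual_pair (c1 c2 : F) (sA sB : seq 'I_3) := [::
  scale_dual (c1 * (A1 * B2 - A2 * B1))^-1 [:: (B2, sA); (- A2, sB)];
  scale_dual (c2 * (A1 * B2 - A2 * B1))^-1 [:: (- B1, sA); (A1, sB)]].

Definition deg4_dual :=
  dual_pair 1 1 [:: x; z; x; y] [:: x; y; x; z] ++ dual_pair 1 1 [:: z; x; y; x] [:: y; x; z; x] ++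
  dual_pair w (w ^+ 2) [:: y; x; y; z] [:: y; z; y; x] ++
  dual_pair w (w ^+ 2) [:: x; y; z; y] [:: z; y; x; y] ++
  dual_pair (w ^+ 2) w [:: z; y; z; x] [:: z; x; z; y] ++
  dual_pair (w ^+ 2) w [:: y; z; x; z] [:: x; z; y; z].

Lemma rank_deg4_generic :
  \rank (component_mx 4 (deg4_rels w A1 B1 A2 B2) *m sqfree_mx F 4) = 12%N.
Proof.
have w2_neq0 : w ^+ 2 != 0 by rewrite expf_neq0.
apply: (@rank_dual_certificate _ _ _ deg4_dual) => // i l.
case_ord i; case_ord l => // _.
all: rewrite /= !big_cons !big_nil /sqfree_part /= !sandwichE /= /gen1 /gen2 /lin /mono /=.
all: rewrite ?big_cons ?big_nil /=; field.
all: by rewrite ?w_neq0 ?w2_neq0 ?det_neq0.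
Qed.

End Degree4Generic.

Section Degree4Degenerate.
Variables (F : fieldType) (w A B l a b : F).
Hypotheses (w3 : w ^+ 3 = 1) (w_neq0 : w != 0) (l_neq0 : l != 0).
Hypotheses (w_neq1 : 1 - w != 0) (w2_neq1 : w ^+ 2 - 1 != 0) (w_neq_w2 : w - w ^+ 2 != 0).
Hypothesis N_neq0 : A * a + B * b != 0.
Local Notation N := (A * a + B * b).
Local Notation g1 := (gen1 w A B).
Local Notation g2 := (gen2 w (l * A) (l * B)).

Definition deg4_basis : seq (ncpoly F) :=
  flatten [seq [:: sandwich [:: e] g1 [::]; sandwich [:: e] g2 [::]; sandwich [::] g1 [:: e]]
          | e <- [:: x; y; z]].

(* The rows e g1, e g2, g1 e of [deg4_basis] are supported on the words LA, LB
   (only in e g1 and e g2, coefficients c A, c B in e g1), RA, RB (only in g1 e,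
   coefficients c A, c B) and MA, MB (coefficients p1 A, q1 B in e g1).  The
   second functional is corrected on LA, LB to vanish on e g1; k is its pairing
   with e g2 divided by l N. *)
Definition block_dual (c k p1 q1 : F) (LA LB MA MB RA RB : seq 'I_3) :=
  let phiL := [:: (a, LA); (b, LB)] in [::
  scale_dual (c * N)^-1 phiL;
  scale_dual (l * k * N)^-1
    ([:: (a, MA); (- b, MB)] ++ scale_dual (- (a * p1 * A - b * q1 * B) / (c * N)) phiL);
  scale_dual (c * N)^-1 [:: (a, RA); (b, RB)]].

Definition deg4_basis_dual :=
  block_dual 1 (w - w ^+ 2) (w ^+ 2) w
    [:: x; z; x; y] [:: x; y; x; z] [:: x; y; z; x]
    [:: x; z; y; x] [:: z; x; y; x] [:: y; x; z; x] ++
  block_dual w (1 - w) 1 (w ^+ 2)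
    [:: y; x; y; z] [:: y; z; y; x] [:: y; z; x; y]
    [:: y; x; z; y] [:: x; y; z; y] [:: z; y; x; y] ++
  block_dual (w ^+ 2) (w ^+ 2 - 1) w 1
    [:: z; y; z; x] [:: z; x; z; y] [:: z; x; y; z]
    [:: z; y; x; z] [:: y; z; x; z] [:: x; z; y; z].

Lemma rank_deg4_basis : \rank (component_mx 4 deg4_basis *m sqfree_mx F 4) = 9%N.
Proof.
have w2_neq0 : w ^+ 2 != 0 by rewrite expf_neq0.
apply: (@rank_dual_certificate _ _ _ deg4_basis_dual) => // i j.
case_ord i; case_ord j => // _.
all: rewrite /= !big_cons !big_nil /sqfree_part /= !sandwichE /= /gen1 /gen2 /lin /mono /=.
all: rewrite ?big_cons ?big_nil /=; field: w3.
all: by rewrite ?w_neq0 ?w2_neq0 ?l_neq0 ?N_neq0 ?w_neq1 ?w2_neq1 ?w_neq_w2.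
Qed.

Lemma sqfree_part_g2_right (e : 'I_3) (t : 4.-tuple 'I_3) :
  sqfree_part (sandwich [::] g2 [:: e]) t =
    l * w ^+ e * (sqfree_part (sandwich [:: e] g1 [::]) t + sqfree_part (sandwich [::] g1 [:: e]) t)
    - sqfree_part (sandwich [:: e] g2 [::]) t.
Proof.
case: t => [[|e1 [|e2 [|e3 [|e4 [|]]]]] // sz_t].
case: (ord3P e) => ->; case: (ord3P e1) => ->; case: (ord3P e2) => ->;
  case: (ord3P e3) => ->; case: (ord3P e4) => ->.
all: rewrite /sqfree_part /= ?sandwichE /= /gen1 /gen2 /lin /mono ?big_cons ?big_nil /=.
all: ring: w3.
Qed.

Lemma deg4_rels_sub_basis f : List.In f (deg4_rels w A B (l * A) (l * B)) ->
  (coef_row 4 (sqfree_part f) <= component_mx 4 deg4_basis *m sqfree_mx F 4)%MS.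
Proof.
have g2_right_sub (e : 'I_3) : (coef_row 4 (sqfree_part (sandwich [::] g2 [:: e]))
    <= component_mx 4 deg4_basis *m sqfree_mx F 4)%MS.
  apply: (@sqfree_part_lincomb_sub _ _ _ _
    [:: (l * w ^+ e, sandwich [:: e] g1 [::]); (l * w ^+ e, sandwich [::] g1 [:: e]);
        (-1, sandwich [:: e] g2 [::])]) => [p|t].
    by case: (ord3P e) => -> [<-|[<-|[<-|[]]]]; rewrite /deg4_basis /=; do ?[by left | right].
  by rewrite sqfree_part_g2_right !big_cons big_nil mulN1r addr0 mulrDr addrA.
have basis_sub f' : List.In f' deg4_basis ->
    (coef_row 4 (sqfree_part f') <= component_mx 4 deg4_basis *m sqfree_mx F 4)%MS.
  exact: sqfree_part_sub.
rewrite /deg4_rels /=.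
by do 12?[case=> [<-|]; first solve [apply: g2_right_sub |
                                      (apply: basis_sub; rewrite /=; do ?[by left | right])]].
Qed.

Lemma rank_deg4_degenerate :
  \rank (component_mx 4 (deg4_rels w A B (l * A) (l * B)) *m sqfree_mx F 4) = 9%N.
Proof.
have basis_sub_rels f : List.In f deg4_basis -> (coef_row 4 (sqfree_part f)
    <= component_mx 4 (deg4_rels w A B (l * A) (l * B)) *m sqfree_mx F 4)%MS.
  move=> Bf; apply: sqfree_part_sub; move: Bf; rewrite /deg4_basis /deg4_rels /=.
  by do 9?[case=> [<-|]; first by do ?[by left | right]].
apply/eqP; rewrite eqn_leq -rank_deg4_basis.
by rewrite (rank_sqfree_le deg4_rels_sub_basis) (rank_sqfree_le basis_sub_rels).
Qed.

End Degree4Degenerate.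

Section Scalars.
Variable F : fieldType.

Lemma pairing_neq0 (A B : F) : (A, B) != (0, 0) -> exists a b, A * a + B * b != 0.
Proof.
move=> AB_neq0; have [A0|A_neq0] := eqVneq A 0; last by exists 1, 0; rewrite mulr1 mulr0 addr0.
exists 0, 1; rewrite A0 mul0r add0r mulr1.
by apply: contraNneq AB_neq0 => ->; rewrite A0.
Qed.

Lemma proportional_of_det0 (A1 B1 A2 B2 : F) : (A1, B1) != (0, 0) -> (A2, B2) != (0, 0) ->
  A1 * B2 - A2 * B1 = 0 -> exists2 l, l != 0 & (A2, B2) = (l * A1, l * B1).
Proof.
move=> AB1 AB2 det0; have [a [b N_neq0]] := pairing_neq0 AB1.
set N := A1 * a + B1 * b; set M := A2 * a + B2 * b.
have eqA : A2 * N = M * A1.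
  by apply/subr0_eq; transitivity (- b * (A1 * B2 - A2 * B1)); [rewrite /N /M; ring | rewrite det0 mulr0].
have eqB : B2 * N = M * B1.
  by apply/subr0_eq; transitivity (a * (A1 * B2 - A2 * B1)); [rewrite /N /M; ring | rewrite det0 mulr0].
have propl : (A2, B2) = (M / N * A1, M / N * B1).
  by congr pair; apply: (mulIf N_neq0); rewrite mulrAC divfK.
exists (M / N); last exact: propl.
by apply: contraNneq AB2 => l0; rewrite propl l0 !mul0r.
Qed.

Lemma prim_root3P (w : F) : 3.-primitive_root w ->
  [/\ w ^+ 3 = 1, w != 0, 1 - w != 0 & w ^+ 2 - 1 != 0].
Proof.
move=> w_prim; have w3 := prim_expr_order w_prim.
split=> //; rewrite ?subr_eq0.
- by apply: contra_eq_neq w3 => ->; rewrite expr0n eq_sym oner_neq0.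
- by rewrite eq_sym -[w]expr1 -(prim_order_dvd w_prim 1).
- by rewrite -(prim_order_dvd w_prim 2).
Qed.

End Scalars.

Lemma quot_dim_binomial_iff (F : fieldType) (w A1 B1 A2 B2 : F) :
  3.-primitive_root w ->
  (A1, B1) != (0, 0) -> (A2, B2) != (0, 0) ->
  (forall k : nat, (k <= 4)%N ->
     quot_dim k (SIp_gens w A1 B1 A2 B2) = 'C(k + 2, 2))
  <-> A1 * B2 - A2 * B1 = 0.
Proof.
move=> /prim_root3P [w3 w_neq0 w_neq1 w2_neq1] AB1 AB2.
have w_neq_w2 : w - w ^+ 2 != 0 by rewrite -[w in w - _]mulr1 -mulrBr mulf_neq0.
have [a1 [b1 N1]] := pairing_neq0 AB1; have [a2 [b2 N2]] := pairing_neq0 AB2.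
have dim3 : quot_dim 3 (SIp_gens w A1 B1 A2 B2) = 10%N.
  by rewrite quot_dim3 card_sqfree_idx (rank_deg3 w_neq_w2 N1 N2).
split=> [dims | det0].
  apply/eqP/negPn/negP => det_neq0.
  by move: (dims 4%N isT); rewrite quot_dim4 card_sqfree_idx rank_deg4_generic.
case=> [|[|[|[|[|//]]]]] _; try by rewrite quot_dim_le2 // card_sqfree_idx.
  exact: dim3.
have [l l_neq0 [-> ->]] := proportional_of_det0 AB1 AB2 det0.
rewrite quot_dim4 card_sqfree_idx.
by rewrite (rank_deg4_degenerate w3 w_neq0 l_neq0 w_neq1 w2_neq1 w_neq_w2 N1).
Qed.

Theorem mainTheorem9 (w A1 B1 A2 B2 : Cx) :
  3.-primitive_root w ->
  (A1, B1) != (0, 0) -> (A2, B2) != (0, 0) ->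
  (forall k : nat, (k <= 4)%N ->
     quot_dim k (SIp_gens w A1 B1 A2 B2) = 'C(k + 2, 2))
  <-> A1 * B2 - A2 * B1 = 0.
Proof. exact: quot_dim_binomial_iff. Qed.
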